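(* On $T^*\mathrm{Eng}(n)$, for all $i,j\in\{1,\dots,n\}$ with $i\neq j$ and all $N\in\{1,\dots,n\}$, the functions $L_{ij}$ and $C_N$ are prime integrals of the normal Hamiltonian flow, i.e. $\{L_{ij},H\}=0$ and $\{C_N,H\}=0$.
   Context: $\mathrm{Eng}(n)$ is the simply connected Lie group with Lie algebra basis $X_1,\dots,X_n,Y_0,\dots,Y_{n+1}$ whose only nontrivial brackets (up to antisymmetry) are $[X_i,Y_0]=Y_i$ and $[X_i,Y_i]=Y_{n+1}$, $i=1,\dots,n$; all are viewed as left-invariant vector fields. For a vector field $X$, $P_X\in C^\infty(T^*\mathrm{Eng}(n))$ is $P_X(\lambda)=\langle\lambda,X\rangle$. The normal Hamiltonian is $H=\frac12\big(\sum_{i=1}^nP_{X_i}^2+P_{Y_0}^2\big)$ (the paper's statement is insensitive to the constant factor). Poisson brackets on $T^*\mathrm{Eng}(n)$ (canonical symplectic form) are normalized so that $\{P_X,P_Y\}=P_{[X,Y]}$ for left-invariant $X,Y$. Define $L_{ij}:=P_{X_i}P_{Y_j}-P_{X_j}P_{Y_i}$ and $C_N:=\frac12\sum_{i,j\in\{1,\dots,N\},\,i\neq j}L_{ij}^2$. *)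

From HB Require Import structures.
From mathcomp Require Import all_boot all_order all_algebra.
From mathcomp Require Import mpoly.
Set Implicit Arguments. Unset Strict Implicit. Unset Printing Implicit Defensive.
Import Order.TTheory GRing.Theory Num.Theory.
Local Open Scope ring_scope.

(* Fibre coordinates on T^*Eng(n) in the left trivialisation: the momentum
   functions P_Z for the basis Z of the Lie algebra, with dimension
   d = (n + n).+2 = 2n+2.  Index convention (0-based ordinals):
     X_i  (1 <= i <= n)   |-> index i - 1
     Y_k  (0 <= k <= n+1) |-> index n + k.
   A polynomial in these variables is a polynomial function of the P_Z. *)
Definition dimEng (n : nat) : nat := (n + n).+2.

Section Eng.
Variables (R : realFieldType) (n : nat).
Local Notation d := (dimEng n).
Local Notation P := {mpoly R[d]}.

Definition PX (i : nat) : P := 'X_(inord (i.-1)).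
Definition PY (k : nat) : P := 'X_(inord (n + k)).

(* P_{[e_a, e_b]} for basis vectors e_a, e_b:
   [X_i, Y_0] = Y_i, [X_i, Y_i] = Y_{n+1} (i = 1..n), antisymmetry, others 0. *)
Definition lieP (a b : 'I_d) : P :=
  if (a < n)%N && (nat_of_ord b == n) then PY a.+1
  else if (a < n)%N && (nat_of_ord b == n + a.+1)%N then PY n.+1
  else if (b < n)%N && (nat_of_ord a == n) then - PY b.+1
  else if (b < n)%N && (nat_of_ord a == n + b.+1)%N then - PY n.+1
  else 0.

(* Poisson bracket (canonical symplectic form on T^*Eng(n)) restricted to
   functions of the momenta P_Z: the Leibniz extension of
   {P_X, P_Y} = P_{[X,Y]}, i.e. {f,g} = sum_{a,b} d_a f d_b g P_{[e_a,e_b]}. *)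
Definition poisson (f g : P) : P :=
  \sum_(a < d) \sum_(b < d) (mderiv a f * mderiv b g * lieP a b).

Definition Hnormal : P :=
  2^-1 *: (\sum_(1 <= i < n.+1) PX i ^+ 2 + PY 0 ^+ 2).

Definition Lij (i j : nat) : P := PX i * PY j - PX j * PY i.

Definition CN (N : nat) : P :=
  2^-1 *: (\sum_(1 <= i < N.+1) \sum_(1 <= j < N.+1 | i != j) Lij i j ^+ 2).

End Eng.

From HB Require Import structures.
From mathcomp Require Import all_boot all_order all_algebra.
From mathcomp Require Import mpoly.
From mathcomp Require Import ring zify.
Set Implicit Arguments. Unset Strict Implicit. Unset Printing Implicit Defensive.
Import Order.TTheory GRing.Theory Num.Theory.
Local Open Scope ring_scope.

(** Proof: [f |-> {f, H}] is a derivation of the polynomial algebra in the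
    momenta, so it is determined by Hamilton's equations
    [{P_{X_k}, H} = P_{Y_0} P_{Y_k}] and [{P_{Y_k}, H} = - P_{X_k} P_{Y_{n+1}}].
    Applied to [L_ij] these give two pairs of cancelling terms, and
    [{L_ij^2, H} = 2 L_ij {L_ij, H} = 0] then kills every summand of [C_N]. *)

Section DerivationAlong.
Variables (R : comNzRingType) (d : nat).
Local Notation P := {mpoly R[d]}.
Implicit Types (w : 'I_d -> P) (f g : P).

Definition mderiv_along w f : P := \sum_(a < d) mderiv a f * w a.

Lemma mderiv_along_is_linear w : linear (mderiv_along w).
Proof.
move=> c f g; rewrite /mderiv_along scaler_sumr -big_split /=.
by apply: eq_bigr => a _; rewrite linearP mulrDl scalerAl.
Qed.

HB.instance Definition _ w := GRing.isLinear.Build R P P _ (mderiv_along w)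
  (mderiv_along_is_linear w).

Lemma mderivX1 (i j : 'I_d) : mderiv i ('X_j : P) = (j == i)%:R.
Proof.
rewrite mderivX mnm1E; case: eqP => [->|_]; last by rewrite scale0r.
have -> : (U_(i) - U_(i))%MM = 0%MM by apply/mnmP => k; rewrite mnmBE mnm0E subnn.
by rewrite mpolyX0 scale1r.
Qed.

Lemma mderiv_alongX w (c : 'I_d) : mderiv_along w 'X_c = w c.
Proof.
rewrite /mderiv_along (bigD1 c) //= mderivX1 eqxx mul1r big1 ?addr0 // => a.
by rewrite eq_sym mderivX1 => /negPf ->; rewrite mul0r.
Qed.

Lemma mderiv_alongM w f g :
  mderiv_along w (f * g) = mderiv_along w f * g + f * mderiv_along w g.
Proof.
rewrite /mderiv_along mulr_suml mulr_sumr -big_split; apply: eq_bigr => a _.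
by rewrite /= mderivM; ring.
Qed.

Lemma mderiv_along_sqr w f :
  mderiv_along w (f ^+ 2) = (f * mderiv_along w f) *+ 2.
Proof. by rewrite expr2 mderiv_alongM mulrC. Qed.

End DerivationAlong.

Section Eng.
Variables (R : realFieldType) (n : nat).
Local Notation d := (dimEng n).
Local Notation P := {mpoly R[d]}.
Local Notation PX := (PX R n).
Local Notation PY := (PY R n).
Local Notation H := (Hnormal R n).
Implicit Types (f g : P).

Lemma poisson_alongE f g :
  poisson f g = mderiv_along (fun a => \sum_(b < d) mderiv b g * lieP R a b) f.
Proof.
rewrite /poisson /mderiv_along; apply: eq_bigr => a _; rewrite big_distrr.
by apply: eq_bigr => b _; rewrite /= mulrA.
Qed.

Lemma poisson_Xl (a : 'I_d) g : poisson 'X_a g = mderiv_along (lieP R a) g.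
Proof. by rewrite poisson_alongE mderiv_alongX. Qed.

Lemma poissonE f g : poisson f g = mderiv_along (fun a => poisson 'X_a g) f.
Proof. by rewrite poisson_alongE; apply: eq_bigr => a _; rewrite poisson_Xl. Qed.

Lemma poisson_Xl_H (a : 'I_d) :
  poisson 'X_a H =
  \sum_(1 <= i < n.+1) PX i * lieP R a (inord i.-1) + PY 0 * lieP R a (inord n).
Proof.
rewrite poisson_Xl linearZ raddfD raddf_sum /= mderiv_along_sqr.
under eq_bigr do rewrite mderiv_along_sqr mderiv_alongX.
rewrite mderiv_alongX addn0 sumrMnl -mulrnDl -scaler_nat scalerA.
by rewrite mulVf ?scale1r // pnatr_eq0.
Qed.

Ltac solve_lieP := rewrite /lieP !inordK /dimEng; try lia;
  repeat (case: ifP => ?; try (exfalso; lia)).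

Lemma lieP_XX k i : (1 <= k <= n)%N -> (1 <= i <= n)%N ->
  lieP R (inord k.-1 : 'I_d) (inord i.-1) = 0.
Proof. by move=> hk hi; solve_lieP. Qed.

Lemma lieP_XY0 k : (1 <= k <= n)%N -> lieP R (inord k.-1 : 'I_d) (inord n) = PY k.
Proof. by move=> hk; solve_lieP; rewrite prednK //; lia. Qed.

Lemma lieP_YX k i : (1 <= k <= n)%N -> (1 <= i <= n)%N ->
  lieP R (inord (n + k) : 'I_d) (inord i.-1) = if i == k then - PY n.+1 else 0.
Proof. by move=> hk hi; solve_lieP. Qed.

Lemma lieP_YY0 k : (1 <= k <= n)%N -> lieP R (inord (n + k) : 'I_d) (inord n) = 0.
Proof. by move=> hk; solve_lieP. Qed.

Lemma poisson_PX_H k : (1 <= k <= n)%N -> poisson (PX k) H = PY 0 * PY k.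
Proof.
move=> hk; rewrite poisson_Xl_H lieP_XY0 // big_nat big1 ?add0r // => i hi.
by rewrite lieP_XX ?mulr0 //; lia.
Qed.

Lemma poisson_PY_H k : (1 <= k <= n)%N -> poisson (PY k) H = - (PX k * PY n.+1).
Proof.
move=> hk; rewrite poisson_Xl_H lieP_YY0 // mulr0 addr0.
rewrite (eq_big_nat _ _ (F2 := fun i => if i == k then - (PX k * PY n.+1) else 0)).
  by rewrite -big_mkcond big_nat1_eq ifT //; lia.
move=> i hi; rewrite lieP_YX; try lia.
by case: eqP => [->|_]; rewrite ?mulrN ?mulr0.
Qed.

Lemma poisson_Lij_H i j : (1 <= i <= n)%N -> (1 <= j <= n)%N ->
  poisson (Lij R n i j) H = 0.
Proof.
move=> hi hj; rewrite poissonE raddfB /= !mderiv_alongM !mderiv_alongX.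
rewrite (poisson_PX_H hi) (poisson_PX_H hj) (poisson_PY_H hi) (poisson_PY_H hj).
by ring.
Qed.

End Eng.

Theorem lemma7 (R : realFieldType) (n : nat) :
  (forall i j : nat, (1 <= i <= n)%N -> (1 <= j <= n)%N -> i != j ->
     poisson (Lij R n i j) (Hnormal R n) = 0) /\
  (forall N : nat, (1 <= N <= n)%N ->
     poisson (CN R n N) (Hnormal R n) = 0).
Proof.
split=> [i j hi hj _|N hN]; first exact: poisson_Lij_H.
rewrite poissonE linearZ /= [mderiv_along _ _]raddf_sum big1_seq ?scaler0 // => i.
rewrite mem_index_iota => /andP[_ hi]; rewrite raddf_sum big1_seq //= => j.
rewrite mem_index_iota => /andP[_ hj].
by rewrite mderiv_along_sqr -poissonE poisson_Lij_H ?mulr0 ?mul0rn //; lia.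
Qed.
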